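(* Let $h\in\bar K[z]$ be nonzero and let $h=q^2+\rho$ be a part-square decomposition with $t_{q,\rho}<2v(2)$. Then: (a) the decomposition is good if and only if some (equivalently, any) normalized reduction of $\rho$ is not the square of a polynomial in $k[z]$; (b) if the decomposition $h=q^2+\rho$ is good and $h=\tilde q^2+\tilde\rho$ is another good part-square decomposition, then for any normalized reductions of $\rho$ and $\tilde\rho$, the sets of odd degrees of monomials appearing in them coincide, and their derivatives are equal up to a nonzero scalar in $k$.
   Context: $K$ is a field of characteristic $0$, complete with respect to a discrete valuation $v$ (values in $\mathbb{Q}\cup\{+\infty\}$), with algebraically closed residue field $k$ of characteristic $2$; $v$ extends to a fixed algebraic closure $\bar K$. For nonzero $h(z)=\sum_i H_iz^i\in\bar K[z]$, $v(h)=\min_i v(H_i)$ (Gauss valuation). A normalized reduction of a nonzero $h$ is the image in $k[z]$ of $\gamma^{-1}h$ for some $\gamma\in\bar K^\times$ with $v(\gamma)=v(h)$ (unique up to a nonzero scalar). A part-square decomposition of $h$ is an expression $h=q^2+\rho$ with $q,\rho\in\bar K[z]$ and $\deg q\le\lceil\deg(h)/2\rceil$; set $t_{q,\rho}=v(\rho)-v(h)$. The decomposition is good if either $t_{q,\rho}\ge 2v(2)$, or $t_{q,\rho}<2v(2)$ and there is no part-square decomposition $h=\tilde q^2+\tilde\rho$ with $t_{\tilde q,\tilde\rho}>t_{q,\rho}$. *)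

From HB Require Import structures.
From mathcomp Require Import all_boot all_order all_algebra.
From mathcomp Require Import constructive_ereal.
Set Implicit Arguments. Unset Strict Implicit. Unset Printing Implicit Defensive.
Import Order.TTheory GRing.Theory Num.Theory.
Local Open Scope ring_scope.
Local Open Scope ereal_scope.

(* L plays the role of \bar K (an algebraically closed field),
   K : {pred L} is the subfield K, v : L -> \bar rat the valuation
   (v x = +oo iff x = 0), k the residue field and red : L -> k the residue map
   (meaningful on the valuation ring {x | v x >= 0}). *)

Definition is_valuation (L : fieldType) (v : L -> \bar rat) : Prop :=
  [/\ forall x, v x = +oo <-> x = 0%R,
      forall x, v x != -oo,
      forall x y, v (x * y)%R = v x + v y &
      forall x y, Order.min (v x) (v y) <= v (x + y)%R].

Definition is_subfield (L : fieldType) (K : {pred L}) : Prop :=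
  [/\ 0%R \in K, 1%R \in K,
      forall x y, x \in K -> y \in K -> (x - y)%R \in K,
      forall x y, x \in K -> y \in K -> (x * y)%R \in K &
      forall x, x \in K -> x^-1%R \in K].

Definition discrete_on (L : fieldType) (K : {pred L}) (v : L -> \bar rat) : Prop :=
  exists2 d : rat, (0 < d)%R &
    forall x, x \in K -> x != 0%R -> exists z : int, v x = (d * z%:~R)%:E.

Definition complete_on (L : fieldType) (K : {pred L}) (v : L -> \bar rat) : Prop :=
  forall x : nat -> L, (forall n, x n \in K) ->
    (forall M : rat, exists N : nat, forall m n, (N <= m)%N -> (N <= n)%N ->
        M%:E <= v (x m - x n)%R) ->
    exists2 l, l \in K &
      forall M : rat, exists N : nat, forall n, (N <= n)%N -> M%:E <= v (x n - l)%R.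

Definition algebraic_over (L : fieldType) (K : {pred L}) : Prop :=
  forall x : L, exists2 p : {poly L}, (p != 0%R) && (p \is a polyOver K) & root p x.

(* red is the residue map of the valuation ring of v onto k; the residue
   field of K (image of K's valuation ring) is already all of k *)
Definition residue_map (L k : fieldType) (K : {pred L}) (v : L -> \bar rat)
    (red : L -> k) : Prop :=
  [/\ forall x y, 0 <= v x -> 0 <= v y -> red (x + y)%R = (red x + red y)%R,
      forall x y, 0 <= v x -> 0 <= v y -> red (x * y)%R = (red x * red y)%R,
      red 1%R = 1%R,
      forall x, 0 <= v x -> (red x = 0%R <-> 0 < v x) &
      (forall c : k, exists2 x, x \in K & (0 <= v x) /\ red x = c)].

Definition setting (L k : closedFieldType) (K : {pred L}) (v : L -> \bar rat)
    (red : L -> k) : Prop :=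
  [/\ [pchar L] =i pred0,
      2%N \in [pchar k],
      is_subfield K /\ is_valuation v,
      [/\ discrete_on K v, complete_on K v & algebraic_over K] &
      residue_map K v red].

Definition vpoly (L : fieldType) (v : L -> \bar rat) (h : {poly L}) : \bar rat :=
  \big[Order.min/+oo]_(i < size h) v h`_i.

Definition norm_red (L k : fieldType) (v : L -> \bar rat) (red : L -> k)
    (h : {poly L}) (hbar : {poly k}) : Prop :=
  exists2 g : L, g != 0%R & v g = vpoly v h /\ hbar = map_poly red (g^-1 *: h).

(* h = q^2 + rho is a part-square decomposition: deg q <= ceil(deg h / 2)
   (with deg 0 = -oo, so q = 0 is allowed) *)
Definition part_square (L : fieldType) (h q rho : {poly L}) : Prop :=
  h = (q ^+ 2 + rho)%R /\ (size q <= (uphalf (size h).-1).+1)%N.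

Definition tqr (L : fieldType) (v : L -> \bar rat) (h rho : {poly L}) : \bar rat :=
  vpoly v rho - vpoly v h.

Definition good_decomp (L : fieldType) (v : L -> \bar rat) (h q rho : {poly L}) : Prop :=
  part_square h q rho /\
  ((v 2%R *+ 2 <= tqr v h rho) \/
   (tqr v h rho < v 2%R *+ 2 /\
    ~ exists q' rho', part_square h q' rho' /\ tqr v h rho < tqr v h rho')).

Definition is_square_poly (k : fieldType) (p : {poly k}) : Prop :=
  exists g : {poly k}, p = (g ^+ 2)%R.

From HB Require Import structures.
From mathcomp Require Import all_boot all_order all_algebra.
From mathcomp Require Import constructive_ereal.
From mathcomp Require Import ring lra zify.
Set Implicit Arguments. Unset Strict Implicit. Unset Printing Implicit Defensive.
Import Order.TTheory GRing.Theory Num.Theory.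
Local Open Scope ring_scope.

(* Let g0 be a coefficient of rho of minimal valuation, c a square root of g0,
   R := rho / g0 and Q := q / c, so that h / g0 = Q^2 + R and v(R) = 0.  As the
   residue field is a domain, Gauss's lemma v(P^2) = 2 v(P) holds, and together
   with t_{q,rho} < 2 v(2) it gives v(2 Q) > 0.  Writing any other decomposition
   as h = (q + c S)^2 + rho', we get R = rho' / g0 + S^2 + 2 Q S; so if
   v(rho') >= v(rho), then S is integral and the reduction of R is that of
   rho' / g0 plus a square.  Hence a strictly better decomposition exists iff the
   reduction of R is a square (for the converse, lift a square root of it), and
   two good decompositions have v(rho) = v(rho') and reductions that differ by a
   square, which in characteristic 2 has no odd monomials and zero derivative.
   Normalized reductions of one polynomial differ by a nonzero scalar, which is a
   square in the algebraically closed field k. *)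

Section Valuation.
Variables (L : fieldType) (v : L -> \bar rat).
Hypothesis Hv : is_valuation v.
Local Open Scope ereal_scope.

Lemma v_eq_oo x : v x = +oo <-> x = 0%R. Proof. by case: Hv. Qed.

Lemma v0 : v 0%R = +oo. Proof. exact/v_eq_oo. Qed.

Lemma vM x y : v (x * y)%R = v x + v y. Proof. by case: Hv. Qed.

Lemma vD_ge_min x y : Order.min (v x) (v y) <= v (x + y)%R. Proof. by case: Hv. Qed.

Lemma v_finite x : x != 0%R -> exists a : rat, v x = a%:E.
Proof.
case: Hv => v_oo v_Noo _ _ x_neq0; case E: (v x) => [a| |]; first by exists a.
- by move/v_oo: E => /eqP; rewrite (negbTE x_neq0).
- by have := v_Noo x; rewrite E.
Qed.

Lemma v_neq_Noo x : v x != -oo. Proof. by case: Hv. Qed.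

Lemma v_unit_square x : (x * x = 1)%R -> v x = 0.
Proof.
move=> xx1; have x_neq0 : x != 0%R.
  by apply: contra_eq_neq xx1 => ->; rewrite mul0r eq_sym oner_eq0.
have [a va] := v_finite x_neq0; have [b vb] := v_finite (oner_neq0 L).
have := vM 1 1; rewrite mulr1 vb -EFinD => -[b0].
have := vM x x; rewrite xx1 va vb -EFinD => -[aa]; congr _%:E; lra.
Qed.

Lemma v1 : v 1%R = 0. Proof. by apply: v_unit_square; rewrite mulr1. Qed.

Lemma vN x : v (- x)%R = v x.
Proof. by rewrite -mulN1r vM v_unit_square ?add0e // mulrNN mulr1. Qed.

Lemma vV x : x != 0%R -> v x^-1%R = - v x.
Proof.
move=> x_neq0; have [a va] := v_finite x_neq0.
have [b vb] : exists b : rat, v x^-1%R = b%:E by apply: v_finite; rewrite invr_eq0.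
have := vM x x^-1; rewrite mulfV // v1 va vb -EFinD => -[ab0].
by rewrite -EFinN; congr _%:E; lra.
Qed.

Implicit Types p q : {poly L}.

Lemma vpoly_le_coef p i : vpoly v p <= v p`_i.
Proof.
case: (ltnP i (size p)) => [lt_i_p|le_p_i]; last by rewrite nth_default // v0 leey.
exact: (bigmin_le _ (Ordinal lt_i_p) (fun j : 'I_(size p) => v p`_j)).
Qed.

Lemma le_vpolyP a p : a <= vpoly v p <-> forall i, a <= v p`_i.
Proof.
split=> [a_le i|a_le]; first exact: le_trans a_le (vpoly_le_coef p i).
by apply: le_bigmin => //; apply: leey.
Qed.

Lemma vpoly0 : vpoly v 0 = +oo.
Proof. by rewrite /vpoly size_poly0 big_ord0. Qed.

Lemma vpoly_attained p : p != 0%R -> exists2 j, p`_j != 0%R & vpoly v p = v p`_j.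
Proof.
move=> p_neq0; have lt_last : ((size p).-1 < size p)%N.
  by rewrite prednK // size_poly_gt0.
have [i0 _ vpE] := @eq_bigmin _ _ _ +oo (Ordinal lt_last)
  predT (fun j : 'I_(size p) => v p`_j) isT (fun _ _ => leey _).
exists i0 => //; apply: contraTneq (vpoly_le_coef p (size p).-1) => pi0_eq0.
rewrite /vpoly vpE pi0_eq0 v0 -lead_coefE.
have [a ->] : exists a : rat, v (lead_coef p) = a%:E.
  by apply: v_finite; rewrite lead_coef_eq0.
by rewrite leye_eq.
Qed.

Lemma vpoly_finite p : p != 0%R -> exists a : rat, vpoly v p = a%:E.
Proof. by move=> /vpoly_attained[j pj_neq0 ->]; apply: v_finite. Qed.

Lemma vpoly_neq_Noo p : vpoly v p != -oo.
Proof.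
have [->|/vpoly_finite[a ->]] := eqVneq p 0%R; by [rewrite vpoly0 | ].
Qed.

Lemma lt_vpolyP a p : a < vpoly v p <-> forall i, a < v p`_i.
Proof.
split=> [a_lt i|a_lt]; first exact: lt_le_trans a_lt (vpoly_le_coef p i).
have [p0|/vpoly_attained[j _ ->]] := eqVneq p 0%R; last exact: a_lt.
by have := a_lt 0%N; rewrite p0 coef0 v0 vpoly0.
Qed.

Lemma vpolyD_ge_min p q : Order.min (vpoly v p) (vpoly v q) <= vpoly v (p + q).
Proof.
apply/le_vpolyP => i; rewrite coefD; apply: le_trans (vD_ge_min _ _).
by rewrite le_min !ge_min !vpoly_le_coef ?orbT.
Qed.

Lemma vpolyN p : vpoly v (- p) = vpoly v p.
Proof.
by rewrite /vpoly size_polyN; apply: eq_bigr => i _; rewrite coefN vN.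
Qed.

Lemma vpolyB_ge_min p q : Order.min (vpoly v p) (vpoly v q) <= vpoly v (p - q).
Proof. by rewrite -(vpolyN q) vpolyD_ge_min. Qed.

Lemma v_sum_ge a (I : Type) (r : seq I) (P : pred I) (F : I -> L) :
  (forall i, P i -> a <= v (F i)) -> a <= v (\sum_(i <- r | P i) F i).
Proof.
move=> a_le; apply: (big_ind (fun x => a <= v x)) => [|x y ax ay|//].
  by rewrite v0 leey.
by apply: le_trans (vD_ge_min _ _); rewrite le_min ax ay.
Qed.

Lemma vpolyM_ge p q : vpoly v p + vpoly v q <= vpoly v (p * q).
Proof.
apply/le_vpolyP => i; rewrite coefM; apply: v_sum_ge => j _.
by rewrite vM leeD ?vpoly_le_coef.
Qed.

Lemma vpolyZ c p : vpoly v (c *: p) = v c + vpoly v p.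
Proof.
have [->|p_neq0] := eqVneq p 0%R; first by rewrite scaler0 vpoly0 addey ?v_neq_Noo.
have [j _ vpE] := vpoly_attained p_neq0.
apply/eqP; rewrite eq_le; apply/andP; split.
  by rewrite vpE -vM -coefZ vpoly_le_coef.
by apply/le_vpolyP => i; rewrite coefZ vM leeD // vpoly_le_coef.
Qed.

Lemma vpolyD_ge0 p q : 0 <= vpoly v p -> 0 <= vpoly v q -> 0 <= vpoly v (p + q).
Proof. by move=> p_ge0 q_ge0; apply: le_trans (vpolyD_ge_min _ _); rewrite le_min p_ge0. Qed.

Lemma vpolyB_ge0 p q : 0 <= vpoly v p -> 0 <= vpoly v q -> 0 <= vpoly v (p - q).
Proof. by move=> p_ge0 q_ge0; apply: le_trans (vpolyB_ge_min _ _); rewrite le_min p_ge0. Qed.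

Lemma vpolyB_gt0 p q : 0 < vpoly v p -> 0 < vpoly v q -> 0 < vpoly v (p - q).
Proof. by move=> p_gt0 q_gt0; apply: lt_le_trans (vpolyB_ge_min _ _); rewrite lt_min p_gt0. Qed.

Lemma vpolyM_ge0 p q : 0 <= vpoly v p -> 0 <= vpoly v q -> 0 <= vpoly v (p * q).
Proof. by move=> p_ge0 q_ge0; apply: le_trans (vpolyM_ge _ _); rewrite adde_ge0. Qed.

Lemma vpolyM_gt0 p q : 0 < vpoly v p -> 0 <= vpoly v q -> 0 < vpoly v (p * q).
Proof. by move=> p_gt0 q_ge0; apply: lt_le_trans (vpolyM_ge _ _); rewrite addeC lte_spaddre. Qed.

Lemma rem_neq0_of_tqr_lt h rho (a : rat) :
  h != 0%R -> tqr v h rho < a%:E -> rho != 0%R.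
Proof.
move=> h_neq0; apply: contraTneq => ->; have [s vh] := vpoly_finite h_neq0.
by rewrite /tqr vpoly0 vh.
Qed.

Section Residue.
Variables (k : fieldType) (K : {pred L}) (red : L -> k).
Hypothesis Hred : residue_map K v red.

Lemma redD x y : 0 <= v x -> 0 <= v y -> red (x + y)%R = (red x + red y)%R.
Proof. by case: Hred => + _ _ _ _; apply. Qed.

Lemma redM x y : 0 <= v x -> 0 <= v y -> red (x * y)%R = (red x * red y)%R.
Proof. by case: Hred => _ + _ _ _; apply. Qed.

Lemma red1 : red 1%R = 1%R. Proof. by case: Hred. Qed.

Lemma red_eq0 x : 0 <= v x -> red x = 0%R <-> 0 < v x.
Proof. by case: Hred => _ _ _ + _; apply. Qed.

Lemma red0 : red 0%R = 0%R. Proof. by apply/red_eq0; rewrite v0. Qed.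

Lemma redN x : 0 <= v x -> red (- x)%R = (- red x)%R.
Proof.
move=> vx_ge0; apply/eqP; rewrite -subr_eq0 opprK addrC -redD ?vN //.
by rewrite subrr red0.
Qed.

Lemma red_sum (I : Type) (r : seq I) (P : pred I) (F : I -> L) :
  (forall i, P i -> 0 <= v (F i)) ->
  red (\sum_(i <- r | P i) F i)%R = (\sum_(i <- r | P i) red (F i))%R.
Proof.
move=> F_ge0; pose Q x y := 0 <= v x /\ red x = y.
suff [] : Q (\sum_(i <- r | P i) F i)%R (\sum_(i <- r | P i) red (F i))%R by [].
apply: (big_ind2 Q); first by split; rewrite ?v0 ?red0.
  move=> x1 y1 x2 y2 [x1_ge0 <-] [x2_ge0 <-]; split; last exact: redD.
  by apply: le_trans (vD_ge_min _ _); rewrite le_min x1_ge0.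
by move=> i Pi; split; first exact: F_ge0.
Qed.

Lemma coef_red p i : (map_poly red p)`_i = red p`_i.
Proof. by rewrite coef_map_id0 // red0. Qed.

Lemma red_polyD p q : 0 <= vpoly v p -> 0 <= vpoly v q ->
  map_poly red (p + q) = (map_poly red p + map_poly red q)%R.
Proof.
move=> /le_vpolyP p_ge0 /le_vpolyP q_ge0.
by apply/polyP => i; rewrite coefD !coef_red coefD redD.
Qed.

Lemma red_polyB p q : 0 <= vpoly v p -> 0 <= vpoly v q ->
  map_poly red (p - q) = (map_poly red p - map_poly red q)%R.
Proof.
move=> p_ge0 q_ge0; rewrite red_polyD ?vpolyN //; congr (_ + _)%R.
by apply/polyP => i; rewrite coefN !coef_red coefN redN //; move/le_vpolyP: q_ge0.
Qed.

Lemma red_polyM p q : 0 <= vpoly v p -> 0 <= vpoly v q ->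
  map_poly red (p * q) = (map_poly red p * map_poly red q)%R.
Proof.
move=> /le_vpolyP p_ge0 /le_vpolyP q_ge0; apply/polyP => i.
rewrite coef_red !coefM red_sum => [|j _]; last by rewrite vM adde_ge0.
by apply: eq_bigr => j _; rewrite redM // !coef_red.
Qed.

Lemma red_polyZ c p : 0 <= v c -> 0 <= vpoly v p ->
  map_poly red (c *: p) = red c *: map_poly red p.
Proof.
move=> c_ge0 /le_vpolyP p_ge0.
by apply/polyP => i; rewrite coefZ !coef_red coefZ redM.
Qed.

Lemma red_poly_eq0 p : 0 <= vpoly v p -> map_poly red p = 0%R <-> 0 < vpoly v p.
Proof.
move=> /le_vpolyP p_ge0; rewrite lt_vpolyP; split=> [red_p0 i|p_gt0].
  by apply/red_eq0 => //; rewrite -coef_red red_p0 coef0.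
by apply/polyP => i; rewrite coef_red coef0; apply/red_eq0.
Qed.

Lemma red_neq0 x : v x = 0 -> red x != 0%R.
Proof. by move=> vx0; apply/eqP => /red_eq0; rewrite vx0 ltxx => /(_ (lexx _)). Qed.

Lemma red_poly_neq0 p : vpoly v p = 0 -> map_poly red p != 0%R.
Proof. by move=> vp0; apply/eqP => /red_poly_eq0; rewrite vp0 ltxx => /(_ (lexx _)). Qed.

Lemma vpolyVZ g p : g != 0%R -> vpoly v (g^-1 *: p) = vpoly v p - v g.
Proof. by move=> g_neq0; rewrite vpolyZ // vV // addeC. Qed.

Lemma vpoly_sqr p : vpoly v (p ^+ 2) = vpoly v p *+ 2.
Proof.
have [->|p_neq0] := eqVneq p 0%R; first by rewrite expr0n vpoly0 // mule2n addey.
have [j pj_neq0 vpE] := vpoly_attained p_neq0; set d := p`_j in pj_neq0 vpE.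
have [a va] := v_finite pj_neq0.
set p1 := d^-1 *: p.
have vp1 : vpoly v p1 = 0 by rewrite vpolyVZ // vpE va subee.
have sqr_ge0 : 0 <= vpoly v (p1 * p1) by rewrite vpolyM_ge0 ?vp1.
have vp1_sqr : vpoly v (p1 ^+ 2) = 0.
  apply/eqP; rewrite eq_le expr2 sqr_ge0 andbT leNgt.
  apply: (contraNN _ (red_poly_neq0 vp1)) => /(red_poly_eq0 sqr_ge0) red_sqr0.
  by rewrite -sqrf_eq0 expr2 -red_polyM ?vp1 // red_sqr0.
have -> : p = d *: p1 by rewrite /p1 scalerA mulfV // scale1r.
by rewrite exprZn vpolyZ // vp1_sqr adde0 vpolyZ // vp1 adde0 expr2 vM -mule2n.
Qed.

Lemma vpoly_sqr_gt a Q R : a *+ 2 < vpoly v (Q ^+ 2 + R) -> a *+ 2 < vpoly v R ->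
  a < vpoly v Q.
Proof.
move=> D_gt R_gt; rewrite ltNge; apply/negP => Q_le.
have : a *+ 2 < vpoly v (Q ^+ 2).
  rewrite -(addrK R (Q ^+ 2)%R); apply: lt_le_trans (vpolyB_ge_min _ _).
  by rewrite lt_min D_gt.
by rewrite vpoly_sqr ltNge !mule2n leeD.
Qed.

Lemma red_poly_perturbed_sqr R R' S T :
    0 <= vpoly v R -> 0 <= vpoly v R' -> 0 < vpoly v T ->
    R = (R' + S ^+ 2 + T * S)%R ->
  0 <= vpoly v S /\ map_poly red R = (map_poly red R' + map_poly red S ^+ 2)%R.
Proof.
move=> R_ge0 R'_ge0 T_gt0 RE.
have S_ge0 : 0 <= vpoly v S.
  (* otherwise v(S^2) = 2 v(S) is below the valuation of R - R' - T S = S^2 *)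
  rewrite leNgt; apply/negP => S_lt0.
  have S_fin : vpoly v S \is a fin_num.
    by rewrite fin_numE vpoly_neq_Noo (lt_eqF (lt_trans S_lt0 (ltry 0%R))).
  have : vpoly v S *+ 2 < vpoly v (S ^+ 2).
    have -> : (S ^+ 2 = (R - R') - T * S)%R by rewrite RE; ring.
    apply: lt_le_trans (vpolyB_ge_min _ _); rewrite lt_min mule2n; apply/andP; split.
      by apply: (@lt_le_trans _ _ 0); rewrite ?vpolyB_ge0 // -[0](adde0 0) lteD.
    by apply: lt_le_trans (vpolyM_ge _ _); rewrite lte_leD // (lt_trans S_lt0).
  by rewrite vpoly_sqr ltxx.
have sqr_ge0 : 0 <= vpoly v (S * S) by rewrite vpolyM_ge0.
have TS_gt0 : 0 < vpoly v (T * S) by rewrite vpolyM_gt0.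
split=> //; rewrite RE !expr2 red_polyD ?vpolyD_ge0 ?(ltW TS_gt0) // red_polyD //.
by rewrite red_polyM // (red_poly_eq0 (ltW TS_gt0)).2 // addr0.
Qed.

Lemma lift_poly (sb : {poly k}) :
  exists S, [/\ 0 <= vpoly v S, map_poly red S = sb & (size S <= size sb)%N].
Proof.
have lift c : {x | 0 <= v x & red x = c}.
  apply: sig2_eqW; case: Hred => _ _ _ _ /(_ c)[x _ [x_ge0 xE]]; by exists x.
exists (\poly_(i < size sb) sval (lift sb`_i)); split; last exact: size_poly.
  by apply/le_vpolyP => i; rewrite coef_poly; case: ifP => _; [case: lift | rewrite v0].
apply/polyP => i; rewrite coef_red coef_poly; case: ltnP => [_|le_sb_i].
  by case: lift.
by rewrite red0 nth_default.
Qed.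

Lemma norm_red_scale p r r' : norm_red v red p r -> norm_red v red p r' ->
  exists2 a, a != 0%R & r = a *: r'.
Proof.
move=> [g g_neq0 [vg ->]] [g' g'_neq0 [vg' ->]].
have [b vb] := v_finite g'_neq0.
have vgg' : v (g^-1 * g')%R = 0 by rewrite vM vV // vg -vg' vb -EFinN -EFinD addNr.
have vp' : vpoly v (g'^-1 *: p) = 0 by rewrite vpolyVZ // -vg' vb subee.
exists (red (g^-1 * g')); first exact: red_neq0.
by rewrite -red_polyZ ?vgg' ?vp' // scalerA mulfK.
Qed.
End Residue.
End Valuation.
Lemma size_sqr_double (R : idomainType) (s : {poly R}) :
  ((size s).*2 <= (size (s ^+ 2)).+1)%N.
Proof.
have [->|s_neq0] := eqVneq s 0; first by rewrite size_poly0.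
have := size_exp s 2; have : (0 < size s)%N by rewrite size_poly_gt0.
have : (0 < size (s ^+ 2))%N by rewrite size_poly_gt0 expf_neq0.
lia.
Qed.

Section PartSquare.
Variables (F : fieldType) (h q rho : {poly F}).
Hypothesis Hdec : part_square h q rho.

Lemma size_part_square_rem : (size rho <= (uphalf (size h).-1).*2.+1)%N.
Proof.
case: Hdec => hE size_q; have -> : rho = h - q ^+ 2 by rewrite hE addrC addKr.
apply: leq_trans (size_polyD _ _) _; rewrite size_polyN geq_max.
have := uphalfK (size h).-1 => m2E; apply/andP; split; first lia.
by apply: leq_trans (size_poly_exp_leq q 2) _; lia.
Qed.

Lemma part_square_shift (S : {poly F}) : ((size S).*2 <= (size rho).+1)%N ->
  part_square h (q + S) (h - (q + S) ^+ 2).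
Proof.
move=> size_S; split; first by rewrite addrC subrK.
apply: leq_trans (size_polyD _ _) _; rewrite geq_max; case: Hdec => _ -> /=.
move: size_S size_part_square_rem; move: (uphalf _) (size S) (size rho) => m s r; lia.
Qed.
End PartSquare.

Section Char2.
Variables (k : fieldType) (k_char2 : (2 \in [pchar k])%N).

Lemma deriv_sqr (f : {poly k}) : (f ^+ 2)^`() = 0.
Proof. by rewrite expr2 derivM mulrC -mulr2n -scaler_nat (pcharf0 k_char2) scale0r. Qed.

Lemma coef_sqr_odd (f : {poly k}) i : odd i -> (f ^+ 2)`_i = 0.
Proof.
(* i f_i is a coefficient of the zero derivative, and odd i is a unit in k *)
case: i => [//|i] odd_i; have := coef_deriv (f ^+ 2) i; rewrite deriv_sqr coef0.
by rewrite -mulr_natr -(GRing.natr_mod_pchar k_char2) modn2 odd_i mulr1 => <-.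
Qed.

Lemma scale_add_sqr_odd_coef_deriv (p p' s : {poly k}) (a b : k) :
    a != 0 -> b != 0 -> p = p' + s ^+ 2 ->
  (forall i, odd i -> ((a *: p)`_i == 0) = ((b *: p')`_i == 0)) /\
  exists2 c, c != 0 & (a *: p)^`() = c *: (b *: p')^`().
Proof.
move=> a_neq0 b_neq0 ->; split=> [i odd_i|].
  by rewrite !coefZ coefD coef_sqr_odd // addr0 !mulf_eq0 (negbTE a_neq0) (negbTE b_neq0).
exists (a / b); first by rewrite mulf_neq0 ?invr_eq0.
by rewrite !derivZ derivD deriv_sqr addr0 scalerA mulfVK.
Qed.
End Char2.

Lemma exists_sqrt (F : closedFieldType) (a : F) : exists x : F, x ^+ 2 = a.
Proof.
have [x xE] := @solve_monicpoly F 2 (fun i => if i == 0%N then a else 0) isT.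
by exists x; rewrite xE !big_ord_recl big_ord0 /= mul0r expr0 mulr1 !addr0.
Qed.

Lemma is_square_polyZ (F : closedFieldType) (a : F) (p : {poly F}) :
  a != 0 -> is_square_poly (a *: p) <-> is_square_poly p.
Proof.
move=> a_neq0; have [b b2] := exists_sqrt a.
have b_neq0 : b != 0 by apply: contraNneq a_neq0 => b0; rewrite -b2 b0 expr0n.
split=> -[f fE]; last by exists (b *: f); rewrite fE exprZn b2.
exists (b^-1 *: f); apply: (scalerI a_neq0); rewrite fE exprZn -b2 scalerA.
by rewrite -exprMn mulfV // expr1n scale1r.
Qed.

Lemma sqr_shiftE (F : fieldType) (c : F) (h q Q R S : {poly F}) :
    c != 0 -> q = c *: Q -> h = q ^+ 2 + c ^+ 2 *: R ->
  (c ^+ 2)^-1 *: (h - (q + c *: S) ^+ 2) = R - S ^+ 2 - 2%:R *: Q * S.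
Proof.
move=> c_neq0 -> ->.
rewrite [X in _ *: X](_ : _ = c ^+ 2 *: (R - S ^+ 2 - 2%:R *: Q * S)).
  by rewrite scalerA mulVf ?expf_neq0 // scale1r.
by rewrite -!mul_polyC !expr2 !polyCM; ring.
Qed.

Lemma norm_red_square_iff (L : fieldType) (k : closedFieldType) (K : {pred L})
    (v : L -> \bar rat) (red : L -> k) (p : {poly L}) (r r' : {poly k}) :
    is_valuation v -> residue_map K v red ->
    norm_red v red p r -> norm_red v red p r' ->
  is_square_poly r <-> is_square_poly r'.
Proof.
move=> Hv Hred nr nr'; have [a a_neq0 ->] := norm_red_scale Hv Hred nr nr'.
exact: is_square_polyZ.
Qed.

Lemma v2_gt0 (L k : fieldType) (K : {pred L}) (v : L -> \bar rat) (red : L -> k) :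
    [pchar L] =i pred0 -> (2 \in [pchar k])%N ->
    is_valuation v -> residue_map K v red ->
  exists2 e : rat, v 2%R = e%:E & (0 < e)%R.
Proof.
move=> L_char0 k_char2 Hv Hred.
have two_neq0 : 2%:R != 0 :> L by have := L_char0 2; rewrite !inE /= => /negbT.
have [e ve] := v_finite Hv two_neq0; exists e => //.
have v2_ge0 : (0 <= v 2%:R)%E by apply: le_trans (vD_ge_min Hv _ _); rewrite v1 // minxx.
have : red 2%:R = 0 by rewrite (redD Hred) ?v1 // (red1 Hred) -mulr2n (pcharf0 k_char2).
by move/(red_eq0 Hred v2_ge0); rewrite ve lte_fin.
Qed.

Section Decomposition.
Variables (L k : closedFieldType) (K : {pred L}) (v : L -> \bar rat) (red : L -> k).
Hypotheses (Hv : is_valuation v) (Hred : residue_map K v red).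
Variable e : rat.
Hypotheses (v2E : v 2%R = e%:E) (e_gt0 : (0 < e)%R).
Variables (h q rho : {poly L}).
Hypotheses (h_neq0 : h != 0) (Hdec : part_square h q rho).
Hypothesis Ht : (tqr v h rho < v 2%R *+ 2)%E.
Variables (g0 c : L).
Hypotheses (g0_neq0 : g0 != 0) (vg0 : v g0 = vpoly v rho) (c2 : c ^+ 2 = g0).
Local Open Scope ereal_scope.

Local Notation R := (g0^-1 *: rho).
Local Notation Q := (c^-1 *: q).

Lemma c_neq0 : (c != 0)%R.
Proof. by apply: contraNneq g0_neq0 => c0; rewrite -c2 c0 expr0n. Qed.

Lemma vpoly_R : vpoly v R = 0.
Proof.
have [t vt] := v_finite Hv g0_neq0.
by rewrite vpolyVZ // -vg0 vt subee.
Qed.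

Lemma rem_shiftE S : (g0^-1 *: (h - (q + c *: S) ^+ 2) = R - S ^+ 2 - 2%:R *: Q * S)%R.
Proof.
have [hE _] := Hdec; rewrite -c2; apply: sqr_shiftE c_neq0 _ _.
  by rewrite scalerA mulfV ?c_neq0 // scale1r.
by rewrite hE scalerA mulfV ?expf_neq0 ?c_neq0 // scale1r.
Qed.

Lemma vpoly_2Q_gt0 : 0 < vpoly v (2%:R *: Q).
Proof.
have [s vh] := vpoly_finite Hv h_neq0; have [t vt] := v_finite Hv g0_neq0.
have [hE _] := Hdec.
have hQR : (g0^-1 *: h = Q ^+ 2 + R)%R by rewrite hE scalerDr exprZn exprVn c2.
have vQ : (- e)%:E < vpoly v Q.
  have hQR_gt : (- e)%:E *+ 2 < vpoly v (Q ^+ 2 + R)%R.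
    move: Ht; rewrite -hQR vpolyVZ // /tqr -vg0 vt vh v2E -!EFin_natmul -!EFinB.
    by rewrite !lte_fin; lra.
  have R_gt : (- e)%:E *+ 2 < vpoly v R.
    by rewrite vpoly_R -EFin_natmul lte_fin mulNrn oppr_lt0 pmulrn_rgt0.
  exact: (vpoly_sqr_gt Hv Hred hQR_gt R_gt).
by rewrite vpolyZ // v2E -lteBlDl // sub0e -EFinN.
Qed.

Lemma le_vpoly_rem p : (vpoly v rho <= vpoly v p) = (0 <= vpoly v (g0^-1 *: p)).
Proof.
have [t vt] := v_finite Hv g0_neq0.
by rewrite vpolyVZ // -vg0 sube_ge0 // vt.
Qed.

Lemma lt_vpoly_rem p : (vpoly v rho < vpoly v p) = (0 < vpoly v (g0^-1 *: p)).
Proof. by rewrite vpolyVZ // -vg0 sube_gt0. Qed.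

Lemma lt_tqr p p' : (tqr v h p < tqr v h p') = (vpoly v p < vpoly v p').
Proof.
have [s vh] := vpoly_finite Hv h_neq0.
by rewrite /tqr lteD2rE // vh.
Qed.

Lemma better_of_square : is_square_poly (map_poly red R) ->
  exists q' rho', part_square h q' rho' /\ tqr v h rho < tqr v h rho'.
Proof.
case=> sb sbE; have [S [S_ge0 SE size_S]] := lift_poly Hv Hred sb.
exists (q + c *: S)%R, (h - (q + c *: S) ^+ 2)%R; split.
  apply: (part_square_shift Hdec); rewrite size_scale ?c_neq0 //.
  rewrite -leq_double in size_S; apply: leq_trans size_S (leq_trans (size_sqr_double sb) _).
  by rewrite -sbE ltnS -(size_scale rho (invr_neq0 g0_neq0)) size_poly.
rewrite lt_tqr lt_vpoly_rem rem_shiftE vpolyB_gt0 ?vpolyM_gt0 ?vpoly_2Q_gt0 //.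
have sqr_ge0 : 0 <= vpoly v (S ^+ 2) by rewrite expr2 vpolyM_ge0.
apply/(red_poly_eq0 Hv Hred); first by rewrite vpolyB_ge0 ?vpoly_R.
by rewrite (red_polyB Hv Hred) ?vpoly_R // expr2 (red_polyM Hv Hred) // SE -expr2 sbE subrr.
Qed.

Lemma red_rem_add_sqr q' rho' : h = (q' ^+ 2 + rho')%R -> vpoly v rho <= vpoly v rho' ->
  exists s, map_poly red R = (map_poly red (g0^-1 *: rho') + s ^+ 2)%R.
Proof.
move=> hE' le_rho'; set S := c^-1 *: (q' - q).
have q'E : q' = (q + c *: S)%R by rewrite scalerA mulfV ?c_neq0 // scale1r addrC subrK.
have RE : R = (g0^-1 *: rho' + S ^+ 2 + 2%:R *: Q * S)%R.
  have rho'E : rho' = (h - q' ^+ 2)%R by rewrite hE' addrC addKr.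
  have := rem_shiftE S; rewrite -q'E -rho'E => ->.
  by rewrite addrAC subrK subrK.
have R_ge0 : 0 <= vpoly v R by rewrite vpoly_R.
have [|_ ->] := red_poly_perturbed_sqr Hv Hred R_ge0 _ vpoly_2Q_gt0 RE.
  by rewrite -le_vpoly_rem.
by exists (map_poly red S).
Qed.

Lemma good_decompE : good_decomp v h q rho <-> ~ is_square_poly (map_poly red R).
Proof.
split=> [[_ [t_ge|[_ no_better]]] sq|not_sq].
- by move: Ht; rewrite ltNge t_ge.
- exact: no_better (better_of_square sq).
split=> //; right; split=> // -[q' [rho' [[hE' _] better]]]; apply: not_sq.
have rho'_gt : 0 < vpoly v (g0^-1 *: rho') by rewrite -lt_vpoly_rem -lt_tqr.
have [|s ->] := red_rem_add_sqr hE' _; first by rewrite ltW // -lt_tqr.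
by exists s; rewrite (red_poly_eq0 Hv Hred (ltW rho'_gt)).2 // add0r.
Qed.

Lemma good_decomp_vpoly_eq q' rho' :
  good_decomp v h q rho -> good_decomp v h q' rho' -> vpoly v rho' = vpoly v rho.
Proof.
move=> [_ good] [dec' good'].
have not_better : ~ tqr v h rho < tqr v h rho'.
  case: good => [t_ge|[_ no_better] better]; first by move: Ht; rewrite ltNge t_ge.
  by apply: no_better; exists q', rho'.
have not_worse : ~ tqr v h rho' < tqr v h rho.
  case: good' => [t'_ge|[_ no_better'] worse]; last by apply: no_better'; exists q, rho.
  by move=> _; apply: not_better; apply: lt_le_trans Ht t'_ge.
by apply/eqP; rewrite eq_le !leNgt -!lt_tqr; apply/andP; split; apply/negP.
Qed.

Lemma good_decomp_norm_red q' rho' :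
    good_decomp v h q rho -> good_decomp v h q' rho' ->
  norm_red v red rho' (map_poly red (g0^-1 *: rho')).
Proof. by move=> good good'; exists g0; rewrite ?(good_decomp_vpoly_eq good good'). Qed.

Lemma good_decomps_red q' rho' :
    good_decomp v h q rho -> good_decomp v h q' rho' ->
  exists s, map_poly red R = (map_poly red (g0^-1 *: rho') + s ^+ 2)%R.
Proof.
move=> good good'; have [[hE' _] _] := good'.
by apply: red_rem_add_sqr hE' _; rewrite (good_decomp_vpoly_eq good good').
Qed.
End Decomposition.

Local Open Scope ereal_scope.

Theorem proposition3p13 (L k : closedFieldType) (K : {pred L})
    (v : L -> \bar rat) (red : L -> k)
    (Hset : setting K v red)
    (h q rho : {poly L}) (hnz : h != 0%R)
    (Hdec : part_square h q rho) (Ht : tqr v h rho < v 2%R *+ 2) :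
  ((good_decomp v h q rho <->
      exists2 r : {poly k}, norm_red v red rho r & ~ is_square_poly r) /\
   (good_decomp v h q rho <->
      forall r : {poly k}, norm_red v red rho r -> ~ is_square_poly r)) /\
  (good_decomp v h q rho ->
   forall q' rho' : {poly L}, good_decomp v h q' rho' ->
   forall (r r' : {poly k}), norm_red v red rho r -> norm_red v red rho' r' ->
     (forall i : nat, odd i -> (r`_i == 0%R) = (r'`_i == 0%R)) /\
     exists2 c : k, c != 0%R & r^`() = c *: r'^`()).
Proof.
case: Hset => L_char0 k_char2 [_ Hv] _ Hred.
have [e v2E e_gt0] := v2_gt0 L_char0 k_char2 Hv Hred.
have rho_neq0 : rho != 0%R.
  by apply: (rem_neq0_of_tqr_lt Hv (a := e *+ 2) hnz); rewrite EFin_natmul -v2E.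
have [j g0_neq0 /esym vg0] := vpoly_attained Hv rho_neq0.
set g0 := rho`_j in g0_neq0 vg0; have [c c2] := exists_sqrt g0.
have goodE := good_decompE Hv Hred v2E e_gt0 hnz Hdec Ht g0_neq0 vg0 c2.
set r0 := map_poly red (g0^-1 *: rho) in goodE.
have nr0 : norm_red v red rho r0 by exists g0.
have sq_r0 r : norm_red v red rho r -> is_square_poly r <-> is_square_poly r0.
  by move=> nr; apply: norm_red_square_iff Hv Hred nr nr0.
split; [split; split|].
- by move=> /goodE; exists r0.
- by case=> r /sq_r0 sq_iff not_sq; apply/goodE => /sq_iff.
- by move=> /goodE not_sq r /sq_r0 ->.
- by move=> not_sq; apply/goodE; apply: not_sq.
move=> good q' rho' good' r r' nr nr'.
have [s r0E] := good_decomps_red Hv Hred v2E e_gt0 hnz Hdec Ht g0_neq0 vg0 c2 good good'.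
have nr0' := good_decomp_norm_red red Hv hnz Hdec Ht g0_neq0 vg0 good good'.
have [a a_neq0 ->] := norm_red_scale Hv Hred nr nr0.
have [b b_neq0 ->] := norm_red_scale Hv Hred nr' nr0'.
exact: (scale_add_sqr_odd_coef_deriv k_char2 a_neq0 b_neq0 r0E).
Qed.
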